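(* Let $(X,\tau_1,\tau_2)$ be a bitopological space, $i,j\in\{1,2\}$, $i\neq j$, which is $(i,j)$-almost regular, $(i,j)$-semiregular and a $j$-$P$-space. Then $X$ is $\tau_i$-paralindelöf with respect to $\tau_j$ if and only if $X$ is $(i,j)_r$-nearly paralindelöf.
   Context: $(X,\tau_1,\tau_2)$ is a bitopological space and $i,j\in\{1,2\}$, $i\neq j$. For $k\in\{1,2\}$, $k\text{-}\mathrm{int}$ and $k\text{-}\mathrm{cl}$ denote interior and closure with respect to $\tau_k$; ''$k$-open'' means $\tau_k$-open. A set $A$ is $(i,j)$-regular open if $A=i\text{-}\mathrm{int}(j\text{-}\mathrm{cl}(A))$. $X$ is $(i,j)$-semiregular if the $(i,j)$-regular open sets form a base for $\tau_i$. $X$ is $(i,j)$-almost regular if for each $x\in X$ and each $(i,j)$-regular open set $U$ containing $x$ there is an $(i,j)$-regular open set $V$ with $x\in V\subseteq j\text{-}\mathrm{cl}(V)\subseteq U$. A family $\mathcal V$ refines $\mathcal U$ if each member of $\mathcal V$ is contained in some member of $\mathcal U$; a family is a cover of $X$ if its union is $X$. A family is $k$-locally countable if every $x\in X$ has a $k$-open neighbourhood meeting at most countably many of its members. $X$ is a $k$-$P$-space if every intersection of countably many $k$-open sets is $k$-open. $X$ is $\tau_i$-paralindelöf with respect to $\tau_j$ if every cover of $X$ by $i$-open sets has a refinement which is a cover of $X$ by $i$-open sets and is $j$-locally countable. $X$ is $(i,j)_r$-nearly paralindelöf if every cover $\{U_\alpha:\alpha\in\Delta\}$ of $X$ by $(i,j)$-regular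 open sets has a $j$-locally countable cover $\{V_\beta:\beta\in B\}$ of $X$ by $(i,j)$-regular open sets such that for each $\beta\in B$ there is $\alpha(\beta)\in\Delta$ with $j\text{-}\mathrm{cl}(V_\beta)\subseteq U_{\alpha(\beta)}$. *)

From Stdlib Require Import Classical.

Definition set (X : Type) := X -> Prop.

Section Topo.
Context {X : Type}.

Definition subset (A B : set X) : Prop := forall x, A x -> B x.
Definition set_eq (A B : set X) : Prop := forall x, A x <-> B x.

Definition is_topology (O : set X -> Prop) : Prop :=
  O (fun _ => True) /\
  (forall (D : Type) (F : D -> set X), (forall d, O (F d)) ->
      O (fun x => exists d, F d x)) /\
  (forall A B, O A -> O B -> O (fun x => A x /\ B x)).

Definition interior (O : set X -> Prop) (A : set X) : set X :=
  fun x => exists U, O U /\ U x /\ subset U A.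

Definition closure (O : set X -> Prop) (A : set X) : set X :=
  fun x => forall U, O U -> U x -> exists y, U y /\ A y.

Definition regular_open (Oi Oj : set X -> Prop) (A : set X) : Prop :=
  set_eq A (interior Oi (closure Oj A)).

Definition semiregular (Oi Oj : set X -> Prop) : Prop :=
  (forall A, regular_open Oi Oj A -> Oi A) /\
  (forall U x, Oi U -> U x ->
     exists V, regular_open Oi Oj V /\ V x /\ subset V U).

Definition almost_regular (Oi Oj : set X -> Prop) : Prop :=
  forall x U, regular_open Oi Oj U -> U x ->
    exists V, regular_open Oi Oj V /\ V x /\ subset (closure Oj V) U.

Definition countable {B : Type} (P : B -> Prop) : Prop :=
  exists f : {b : B | P b} -> nat, forall u v, f u = f v -> u = v.

Definition is_cover {D : Type} (U : D -> set X) : Prop :=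
  forall x, exists d, U d x.

Definition refines {B D : Type} (V : B -> set X) (U : D -> set X) : Prop :=
  forall b, exists d, subset (V b) (U d).

Definition locally_countable (O : set X -> Prop) {B : Type} (V : B -> set X)
  : Prop :=
  forall x, exists N, O N /\ N x /\
    countable (fun b => exists y, N y /\ V b y).

Definition P_space (O : set X -> Prop) : Prop :=
  forall U : nat -> set X, (forall n, O (U n)) -> O (fun x => forall n, U n x).

Definition paralindelof_wrt (Oi Oj : set X -> Prop) : Prop :=
  forall (D : Type) (U : D -> set X), (forall d, Oi (U d)) -> is_cover U ->
    exists (B : Type) (V : B -> set X),
      refines V U /\ is_cover V /\ (forall b, Oi (V b)) /\
      locally_countable Oj V.

Definition nearly_paralindelof (Oi Oj : set X -> Prop) : Prop :=
  forall (D : Type) (U : D -> set X),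
    (forall d, regular_open Oi Oj (U d)) -> is_cover U ->
    exists (B : Type) (V : B -> set X),
      locally_countable Oj V /\ is_cover V /\
      (forall b, regular_open Oi Oj (V b)) /\
      (forall b, exists d, subset (closure Oj (V b)) (U d)).

End Topo.

Inductive idx := one | two.

Definition sel {X : Type} (k : idx) (t1 t2 : set X -> Prop) : set X -> Prop :=
  match k with one => t1 | two => t2 end.

(* Forward: refine the cover by i-open sets by the regular open V with
   j-cl V inside some member (almost regularity), apply paralindelöfness, and
   replace each member W of the refinement by its regularization i-int (j-cl W):
   it is regular open, contains W, has the same j-closure, and meets a j-open
   set only if W does, so local countability survives.
   Backward: refine an i-open cover by the regular open sets inside its
   members (semiregularity) and apply near paralindelöfness. *)

From Stdlib Require Import Classical.

Section BitopologicalParalindelof.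
Context {X : Type}.
Implicit Types (O Oi Oj : set X -> Prop) (A B N : set X).

Lemma subset_closure O A : subset A (closure O A).
Proof. intros x Ax U _ Ux. exists x; auto. Qed.

Lemma closure_mono O {A B} : subset A B -> subset (closure O A) (closure O B).
Proof.
  intros AB x clA U OU Ux.
  destruct (clA U OU Ux) as [y [Uy Ay]]. exists y; auto.
Qed.

Lemma closure_idem O A : subset (closure O (closure O A)) (closure O A).
Proof.
  intros x clclA U OU Ux.
  destruct (clclA U OU Ux) as [y [Uy clAy]]. apply clAy; auto.
Qed.

Lemma interior_subset {O A} : subset (interior O A) A.
Proof. intros x [U [_ [Ux UA]]]. auto. Qed.

Lemma interior_mono {O A B} : subset A B -> subset (interior O A) (interior O B).
Proof.
  intros AB x [U [OU [Ux UA]]]. exists U; repeat split; auto.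
  intros y Uy; auto.
Qed.

Lemma open_meets_closure {O N A} :
  O N -> (exists y, N y /\ closure O A y) -> exists y, N y /\ A y.
Proof. intros ON [y [Ny clAy]]. exact (clAy N ON Ny). Qed.

Lemma countable_weaken {I : Type} (P Q : I -> Prop) :
  (forall b, Q b -> P b) -> countable P -> countable Q.
Proof.
  intros QP [f f_inj].
  exists (fun u => f (exist _ (proj1_sig u) (QP _ (proj2_sig u)))).
  intros [u Qu] [v Qv] e. apply f_inj in e. inversion e. subst.
  f_equal. apply proof_irrelevance.
Qed.

Definition regularization Oi Oj A : set X := interior Oi (closure Oj A).

Lemma open_subset_regularization {Oi} Oj {A} :
  Oi A -> subset A (regularization Oi Oj A).
Proof.
  intros OA x Ax. exists A; repeat split; auto. apply subset_closure.
Qed.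

Lemma closure_regularization {Oi} Oj {A} :
  Oi A -> set_eq (closure Oj (regularization Oi Oj A)) (closure Oj A).
Proof.
  intros OA x; split; intro h.
  - apply closure_idem. exact (closure_mono Oj (@interior_subset Oi _) x h).
  - eapply closure_mono; [apply open_subset_regularization; exact OA | exact h].
Qed.

Lemma regular_open_regularization {Oi} Oj {A} :
  Oi A -> regular_open Oi Oj (regularization Oi Oj A).
Proof.
  intros OA x.
  split; apply interior_mono; intros y; apply (closure_regularization Oj OA).
Qed.

Lemma locally_countable_regularization Oi {Oj} {I : Type} {V : I -> set X} :
  locally_countable Oj V ->
  locally_countable Oj (fun b => regularization Oi Oj (V b)).
Proof.
  intros lcV x. destruct (lcV x) as [N [ON [Nx cN]]].
  exists N; repeat split; auto.
  eapply countable_weaken; [| exact cN].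
  intros b [y [Ny Ry]]. apply (open_meets_closure ON).
  exists y; split; [exact Ny | exact (interior_subset y Ry)].
Qed.

Lemma nearly_paralindelof_of_paralindelof {Oi Oj} :
  (forall A, regular_open Oi Oj A -> Oi A) -> almost_regular Oi Oj ->
  paralindelof_wrt Oi Oj -> nearly_paralindelof Oi Oj.
Proof.
  intros regular_open_open Har Hp D U RU coverU.
  set (D' := {V : set X |
               regular_open Oi Oj V /\ exists d, subset (closure Oj V) (U d)}).
  destruct (Hp D' (@proj1_sig _ _)) as [B [W [refW [coverW [OW lcW]]]]].
  - intros V. exact (regular_open_open _ (proj1 (proj2_sig V))).
  - intros x. destruct (coverU x) as [d Ux].
    destruct (Har x (U d) (RU d) Ux) as [V [RV [Vx clV]]].
    exists (exist _ V (conj RV (ex_intro _ d clV))). exact Vx.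
  - exists B, (fun b => regularization Oi Oj (W b)).
    split; [| split; [| split]].
    + exact (locally_countable_regularization Oi lcW).
    + intros x. destruct (coverW x) as [b Wx].
      exists b. exact (open_subset_regularization Oj (OW b) x Wx).
    + intros b. exact (regular_open_regularization Oj (OW b)).
    + intros b. destruct (refW b) as [[V [RV [d clV]]] WV].
      exists d. intros x clRx. apply clV.
      apply (closure_mono Oj WV), (closure_regularization Oj (OW b)), clRx.
Qed.

Lemma paralindelof_of_nearly_paralindelof {Oi Oj} :
  semiregular Oi Oj -> nearly_paralindelof Oi Oj -> paralindelof_wrt Oi Oj.
Proof.
  intros [regular_open_open regular_base] Hn D U OU coverU.
  set (D' := {V : set X | regular_open Oi Oj V /\ exists d, subset V (U d)}).
  destruct (Hn D' (@proj1_sig _ _)) as [B [W [lcW [coverW [RW clW]]]]].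
  - intros V. exact (proj1 (proj2_sig V)).
  - intros x. destruct (coverU x) as [d Ux].
    destruct (regular_base (U d) x (OU d) Ux) as [V [RV [Vx VU]]].
    exists (exist _ V (conj RV (ex_intro _ d VU))). exact Vx.
  - exists B, W. split; [| split; [| split]]; auto.
    intros b. destruct (clW b) as [[V [RV [d VU]]] clWV].
    exists d. intros x Wx. apply VU, clWV, subset_closure, Wx.
Qed.

End BitopologicalParalindelof.

Theorem mainTheorem10 (X : Type) (t1 t2 : set X -> Prop)
  (H1 : is_topology t1) (H2 : is_topology t2) (i j : idx) (Hij : i <> j)
  (Har : almost_regular (sel i t1 t2) (sel j t1 t2))
  (Hsr : semiregular (sel i t1 t2) (sel j t1 t2))
  (HP : P_space (sel j t1 t2)) :
  paralindelof_wrt (sel i t1 t2) (sel j t1 t2) <->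
  nearly_paralindelof (sel i t1 t2) (sel j t1 t2).
Proof.
  split.
  - exact (nearly_paralindelof_of_paralindelof (proj1 Hsr) Har).
  - exact (paralindelof_of_nearly_paralindelof Hsr).
Qed.
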